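(* Let $T$ be a tree with at least two vertices, rooted at a vertex $r$ of degree one, and let $V_2$ be the set of vertices labeled 2 in the labeling described in the context. Then for every dominating set $D$ of $T$, $D\leftrightarrow_{|D|+1} V_2$.
   Context: Labeling of $T$ (rooted at a degree-one vertex $r$), from the leaves upwards: every leaf other than $r$ gets label 1; every non-root internal vertex $v$, once all its children are labeled, gets label 1 if all children of $v$ have label 3, label 2 if at least one child has label 1, and label 3 otherwise; the root $r$ gets label 3 if its unique child has label 2, and label 2 otherwise. A set $D\subseteq V(T)$ is a dominating set if every vertex is in $D$ or adjacent to a vertex of $D$. Two dominating sets $D,D'$ are adjacent if $|D\triangle D'|=1$. For dominating sets $D_p,D_q$ and an integer $k>0$, write $D_p\leftrightarrow_k D_q$ if there is a sequence $D_0=D_p,\dots,D_\ell=D_q$ ($\ell\ge0$) of dominating sets of $T$ with consecutive sets adjacent and $|D_i|\le k$ for all $i$. *)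

From mathcomp Require Import all_boot.
Set Implicit Arguments. Unset Strict Implicit. Unset Printing Implicit Defensive.

Section Tree.
Variables (T : finType) (e : rel T).

Definition connected_graph : Prop := forall x y : T, connect e x y.

Definition acyclic_graph : Prop := forall c : seq T, ucycle e c -> size c < 3.

Definition is_tree : Prop :=
  [/\ symmetric e, irreflexive e, connected_graph & acyclic_graph].

Definition degree (v : T) : nat := #|[set u | e v u]|.

(* Tree rooted at r: c is a child of v iff c is adjacent to v and every
   path from c to r passes through v (i.e. c cannot reach r avoiding v). *)
Definition avoid (v : T) : rel T := fun x y => [&& e x y, x != v & y != v].
Definition child (r v c : T) : bool := e v c && ~~ connect (avoid v) c r.
Definition children (r v : T) : seq T := [seq c <- enum T | child r v c].

Fixpoint lab_fuel (r : T) (k : nat) (v : T) : nat :=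
  match k with
  | 0 => 1
  | k'.+1 =>
    let ch := children r v in
    if v == r then
      (if has (fun c => lab_fuel r k' c == 2) ch then 3 else 2)
    else if all (fun c => lab_fuel r k' c == 3) ch then 1
    else if has (fun c => lab_fuel r k' c == 1) ch then 2
    else 3
  end.

(* Heights are < #|T|, so fuel #|T| suffices. *)
Definition label (r v : T) : nat := lab_fuel r #|T| v.

Definition V2 (r : T) : {set T} := [set v | label r v == 2].

Definition dominating (D : {set T}) : Prop :=
  forall v : T, v \in D \/ exists2 u, u \in D & e u v.

Definition adj_sets (A B : {set T}) : bool := #|(A :\: B) :|: (B :\: A)| == 1.

Definition reconf (k : nat) (Dp Dq : {set T}) : Prop :=
  exists s : seq {set T},
    [/\ path adj_sets Dp s, last Dp s = Dq,
        (forall A, A \in Dp :: s -> dominating A) &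
        (forall A, A \in Dp :: s -> #|A| <= k)].

End Tree.

From mathcomp Require Import all_boot zify.
Set Implicit Arguments. Unset Strict Implicit. Unset Printing Implicit Defensive.

(* Bring the vertices of V2 missing from D into D one at a time, lowest first.
   If v is such a vertex with the smallest subtree, every vertex of V2 below v
   already lies in D, and v has a child w labelled 1 (or v = r, whose unique
   child is labelled 1 or 3).  Add v, then delete a vertex u outside V2: u = w
   when w is in D, and otherwise the neighbour of w that dominates it, which is
   a child of w labelled 3.  The only vertices that can lose their dominator
   are labelled 3 or are children of a vertex labelled 3, and such vertices are
   dominated by a child labelled 2, which lies in D by the choice of v.  Each
   swap passes through a set of size |D| + 1.  Once V2 is contained in D, the
   remaining vertices are deleted one by one, V2 itself being dominating. *)

Section Reconfiguration.
Variables (T : finType) (e : rel T).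

Definition dominated (D : {set T}) (y : T) : Prop :=
  y \in D \/ exists2 u, u \in D & e u y.

Lemma dominating_subset (A B : {set T}) :
  dominating e A -> A \subset B -> dominating e B.
Proof.
move=> domA /subsetP sAB y; case: (domA y) => [/sAB|[u /sAB uB euy]]; first by left.
by right; exists u.
Qed.

Lemma dominating_setU1D1 (D : {set T}) v u :
  dominating e D -> dominated ((v |: D) :\ u) u ->
  (forall y, e u y -> y \notin D -> dominated ((v |: D) :\ u) y) ->
  dominating e ((v |: D) :\ u).
Proof.
move=> domD domu domN y; case: (eqVneq y u) => [-> //|yu].
case: (boolP (y \in D)) => [yD|yD]; first by left; rewrite !inE yu yD orbT.
case: (domD y) => [yD'|[z zD ezy]]; first by rewrite yD' in yD.
case: (eqVneq z u) => [zu|zu]; first by apply: domN; rewrite -?zu.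
by right; exists z; rewrite // !inE zu zD orbT.
Qed.

Lemma adj_setsC (A B : {set T}) : adj_sets A B = adj_sets B A.
Proof. by rewrite /adj_sets setUC. Qed.

Lemma adj_sets_setD1 (A : {set T}) x : x \in A -> adj_sets A (A :\ x).
Proof.
move=> xA; rewrite /adj_sets.
have -> : (A :\ x) :\: A = set0 by apply/setP => y; rewrite !inE; case: (y \in A); rewrite ?andbF.
have -> : A :\: (A :\ x) = [set x].
  by apply/setP => y; rewrite !inE; case: eqVneq => [->|_] /=; rewrite ?xA ?andNb.
by rewrite setU0 cards1.
Qed.

Lemma adj_sets_setU1 (A : {set T}) x : x \notin A -> adj_sets A (x |: A).
Proof.
move=> xA; rewrite adj_setsC -{2}(setU1K xA).
by apply: adj_sets_setD1; rewrite setU11.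
Qed.

Lemma reconf_refl k (A : {set T}) : dominating e A -> #|A| <= k -> reconf e k A A.
Proof. by move=> domA leAk; exists [::]; split=> // B; rewrite inE => /eqP ->. Qed.

Lemma reconf_cons k (A B C : {set T}) :
  adj_sets A B -> dominating e A -> #|A| <= k -> reconf e k B C -> reconf e k A C.
Proof.
move=> adjAB domA leAk [s [pathBs lastBs doms sizes]].
exists (B :: s); split=> //=; first by rewrite adjAB pathBs.
- by move=> X; rewrite in_cons => /orP[/eqP ->|/doms].
- by move=> X; rewrite in_cons => /orP[/eqP ->|/sizes].
Qed.

Lemma reconf_to_subset k (V D : {set T}) :
  dominating e V -> V \subset D -> #|D| <= k -> reconf e k D V.
Proof.
move=> domV; have [n] := ubnP #|D|; elim: n D => // n IH D ltDn sVD leDk.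
have [eqDV | neDV] := eqVneq D V; first by rewrite eqDV in leDk *; apply: reconf_refl.
have /subsetPn [x xD xV] : ~~ (D \subset V) by apply: contra neDV => sDV; rewrite eqEsubset sDV.
have ltD : #|D :\ x| < #|D| by rewrite (cardsD1 x D) xD.
apply: (reconf_cons (adj_sets_setD1 xD) (dominating_subset domV sVD) leDk).
apply: IH; first exact: leq_trans ltD _.
- by apply/subsetP => y yV; rewrite !inE (subsetP sVD y yV) andbT; apply: contraNneq xV => <-.
- exact: leq_trans (ltnW ltD) leDk.
Qed.

Lemma reconf_by_swaps k (V D : {set T}) :
  dominating e V ->
  (forall D, dominating e D -> ~~ (V \subset D) ->
     exists v u, [/\ v \in V :\: D, u \in D :\: V & dominating e ((v |: D) :\ u)]) ->
  dominating e D -> #|D| < k -> reconf e k D V.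
Proof.
move=> domV swap; have [n] := ubnP #|V :\: D|; elim: n D => // n IH D ltVDn domD ltDk.
have [sVD | nsVD] := boolP (V \subset D); first by apply: reconf_to_subset => //; lia.
have [v [u [/setDP [vV vD] /setDP [uD uV] domD']]] := swap D domD nsVD.
have uvD : u \in v |: D by rewrite setU1r.
have cardvD : #|v |: D| = #|D|.+1 by rewrite cardsU1 vD.
have cardD' : #|(v |: D) :\ u| = #|D| by move: (cardsD1 u (v |: D)); rewrite uvD cardvD => -[].
have diff : V :\: ((v |: D) :\ u) = (V :\: D) :\ v.
  apply/setP => y; rewrite !inE; case: (eqVneq y u) => [->|_]; first by rewrite (negbTE uV) !andbF.
  by rewrite /= negb_or andbA.
apply: (reconf_cons (adj_sets_setU1 vD) domD (ltnW ltDk)).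
apply: (reconf_cons (adj_sets_setD1 uvD)).
- by apply: dominating_subset domD _; apply: subsetUr.
- by rewrite cardvD.
apply: IH => //; last by rewrite cardD'.
move: ltVDn; rewrite diff (cardsD1 v (V :\: D)) !inE vD vV /=; lia.
Qed.

End Reconfiguration.

Section AvoidingPaths.
Variables (T : finType) (e : rel T).

Lemma path_avoid z x p : path e x p -> z \notin x :: p -> path (avoid e z) x p.
Proof.
elim: p x => [//|y p IH] x /= /andP[exy pp].
rewrite !in_cons !negb_or => /and3P[zx zy zp].
rewrite /avoid exy eq_sym zx eq_sym zy /=.
by apply: IH; rewrite // in_cons negb_or zy.
Qed.

Lemma connect_avoid z x p :
  path e x p -> z \notin x :: p -> connect (avoid e z) x (last x p).
Proof. by move=> exp zxp; apply/connectP; exists p => //; apply: path_avoid. Qed.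

Lemma avoid_connectN x z : x != z -> ~~ connect (avoid e z) x z.
Proof.
move=> xz; apply/negP => /connectP[p].
elim: p x xz => [|y p IH] x xz /=; first by move=> _ xz'; rewrite xz' eqxx in xz.
by case/andP => /and3P[_ _ yz]; apply: IH.
Qed.

Lemma connect_avoid_switch r v c x : ~~ connect (avoid e v) c r -> x != c ->
  connect (avoid e v) x r -> connect (avoid e c) x r.
Proof.
move=> ncr xc /connectP[p].
elim: p x xc => [|y p IH] x xc /=; first by move=> _ ->.
case/andP => /and3P[exy xv yv] yp ryp.
have yc : y != c by apply: contraNneq ncr => <-; apply/connectP; exists p.
apply: connect_trans (connect1 _) (IH y yc yp ryp).
by rewrite /avoid exy xc yc.
Qed.

Hypothesis eirr : irreflexive e.

Lemma connect_avoid_child r v c : e v c -> ~~ connect (avoid e v) c r ->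
  connect e v r -> connect (avoid e c) v r.
Proof.
move=> evc ncr /connectP[p0 vp0 rp0].
have vc : v != c by apply: contraTneq evc => ->; rewrite eirr.
have [n] := ubnP (size p0); elim: n p0 vp0 rp0 => // n IH p vp rp ltpn.
have [cp | ncp] := boolP (c \in p); last first.
  by rewrite rp; apply: connect_avoid; rewrite // in_cons negb_or eq_sym vc.
case/splitPr: cp vp rp ltpn => p1 p2.
rewrite cat_path last_cat /= => /and3P[_ _ cp2] rp ltpn.
have [vp2 | nvp2] := boolP (v \in p2); last first.
  by case/negP: ncr; rewrite rp; apply: connect_avoid; rewrite // in_cons negb_or vc.
case/splitPr: vp2 cp2 rp ltpn => q1 q2.
rewrite cat_path last_cat /= => /and3P[_ _ vq2] rq2 ltpn.
by apply: IH vq2 rq2 _; move: ltpn; rewrite size_cat /= size_cat /=; lia.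
Qed.

End AvoidingPaths.

Section RootedTree.
Variables (T : finType) (e : rel T) (r : T).
Hypothesis esym : symmetric e.
Hypothesis eirr : irreflexive e.
Hypothesis econn : connected_graph e.
Hypothesis eacyc : acyclic_graph e.

Local Notation child := (child e r).
Local Notation children := (children e r).
Local Notation label := (label e r).

Definition del_edge (a b : T) : rel T :=
  fun x y => e x y && ~~ (((x == a) && (y == b)) || ((x == b) && (y == a))).

Lemma del_edge_sym a b : symmetric (del_edge a b).
Proof. by move=> x y; rewrite /del_edge esym orbC [(y == _) && _]andbC [(y == b) && _]andbC. Qed.

Lemma avoid_sub_del_edge a b z : (z == a) || (z == b) ->
  subrel (avoid e z) (connect (del_edge a b)).
Proof.
move=> zab x y /and3P[exy xz yz]; apply: connect1; rewrite /del_edge exy /=.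
by case/orP: zab => /eqP <-; rewrite (negbTE xz) (negbTE yz) ?andbF.
Qed.

(* A detour from a to b avoiding the edge ab would close a cycle of length at least 3. *)
Lemma del_edge_disconnected a b : e a b -> ~~ connect (del_edge a b) a b.
Proof.
move=> eab; apply/negP => /connectP[p ap].
case: (shortenP ap) => p' ap' up' _ bp'.
case: p' ap' up' bp' => [|y [|z q]] /= ap' up' bp'.
- by rewrite bp' eirr in eab.
- by move: ap'; rewrite -bp' /del_edge !eqxx andbF.
- have : ucycle e [:: a, y, z & q].
    apply/andP; split; last exact: up'.
    rewrite /cycle rcons_path /= -bp' [e b a]esym eab andbT.
    by apply: (@sub_path _ _ _ _ a [:: y, z & q] ap') => u w /andP[].
  by move/eacyc.
Qed.

Lemma avoid_edge_disconnected a b :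
  e a b -> connect (avoid e a) b r -> ~~ connect (avoid e b) a r.
Proof.
move=> eab bar; apply/negP => abr; case/negP: (del_edge_disconnected eab).
have subb : subrel (avoid e b) (connect (del_edge a b)).
  by apply: avoid_sub_del_edge; rewrite eqxx orbT.
have suba : subrel (avoid e a) (connect (del_edge a b)).
  by apply: avoid_sub_del_edge; rewrite eqxx.
apply: connect_trans (connect_sub subb abr) _.
by rewrite (sym_connect_sym (@del_edge_sym a b)); apply: connect_sub suba _ _ bar.
Qed.

Lemma exists_parent v : v != r -> exists p, child p v.
Proof.
move=> vr; have /connectP[q vq rq] := econn v r.
case: (shortenP vq) rq => [[|u q'] /= vq' uq _ rq]; first by rewrite rq eqxx in vr.
case/andP: vq' => evu uq'; exists u; rewrite /child esym evu /=.
apply: avoid_edge_disconnected evu _.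
by rewrite rq; apply: connect_avoid; case/andP: uq.
Qed.

Lemma child_edge v c : child v c -> e v c.
Proof. by case/andP. Qed.

Lemma child_neq_root v c : child v c -> c != r.
Proof. by case/andP => _; apply: contraNneq => ->. Qed.

Lemma child_parent_connect v c : child v c -> connect (avoid e c) v r.
Proof. by case/andP => evc ncr; apply: connect_avoid_child => //; apply: econn. Qed.

Lemma neighbor_child v w y : child v w -> e w y -> y != v -> child w y.
Proof.
move=> vw ewy yv; rewrite /child ewy /=; apply/negP => yr.
have wy : w != y by apply: contraTneq ewy => ->; rewrite eirr.
have subw : subrel (avoid e w) (connect (del_edge w y)).
  by apply: avoid_sub_del_edge; rewrite eqxx.
have wv : del_edge w y w v.
  by rewrite /del_edge esym child_edge // eqxx (negbTE wy) /= orbF (eq_sym v) yv.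
case/negP: (del_edge_disconnected ewy).
apply: connect_trans (connect1 wv) _.
apply: connect_trans (connect_sub subw (child_parent_connect vw)) _.
by rewrite (sym_connect_sym (@del_edge_sym w y)); apply: connect_sub subw _ _ yr.
Qed.

Lemma root_child c : e r c -> child r c.
Proof.
move=> erc; rewrite /child erc /=; apply: avoid_connectN.
by apply: contraTneq erc => ->; rewrite eirr.
Qed.

Definition subtree (v : T) : {set T} :=
  [set x | (x == v) || ~~ connect (avoid e v) x r].

Lemma subtree_gt0 v : 0 < #|subtree v|.
Proof. by apply/card_gt0P; exists v; rewrite inE eqxx. Qed.

Lemma subtree_child_lt v c : child v c -> #|subtree c| < #|subtree v|.
Proof.
move=> vc; apply: proper_card; apply/properP; split.
  apply/subsetP => x; rewrite !inE => /orP[/eqP ->|ncx]; first by case/andP: vc => _ ->; rewrite orbT.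
  have [//|xv] := eqVneq x v; have [xc|xc] := eqVneq x c; first by rewrite xc; case/andP: vc.
  by apply: contra ncx; apply: connect_avoid_switch xc; case/andP: vc.
exists v; first by rewrite inE eqxx.
rewrite inE negb_or child_parent_connect // andbT.
by apply: contraTneq (child_edge vc) => ->; rewrite eirr.
Qed.

(* [lab_fuel e r k.+1] unfolds to [label_step (lab_fuel e r k)]. *)
Definition label_step (f : T -> nat) (v : T) : nat :=
  if v == r then (if has (fun c => f c == 2) (children v) then 3 else 2)
  else if all (fun c => f c == 3) (children v) then 1
  else if has (fun c => f c == 1) (children v) then 2
  else 3.

Lemma mem_children v c : (c \in children v) = child v c.
Proof. by rewrite mem_filter mem_enum andbT. Qed.

Lemma eq_label_step f g v : {in children v, f =1 g} -> label_step f v = label_step g v.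
Proof.
move=> fg; have fg_eq n : {in children v, (fun c => f c == n) =1 (fun c => g c == n)}.
  by move=> c /fg /= ->.
by rewrite /label_step !(eq_in_has (fg_eq _)) (eq_in_all (fg_eq _)).
Qed.

Lemma lab_fuel_stable k1 k2 v : #|subtree v| <= k1 -> #|subtree v| <= k2 ->
  lab_fuel e r k1 v = lab_fuel e r k2 v.
Proof.
elim: k1 k2 v => [|k1 IH] k2 v le1 le2; first by move: (subtree_gt0 v); rewrite ltnNge le1.
case: k2 le2 => [|k2] le2; first by move: (subtree_gt0 v); rewrite ltnNge le2.
apply: eq_label_step => c; rewrite mem_children => vc.
by have := subtree_child_lt vc => lt; apply: IH; lia.
Qed.

Lemma label_stepE v : label v = label_step label v.
Proof.
rewrite {1}/label; have : #|subtree v| <= #|T| := max_card _.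
have := subtree_gt0 v; case: #|T| => [|n] gt0 le; first by move: gt0; rewrite ltnNge le.
apply: eq_label_step => c; rewrite mem_children => vc.
have := subtree_child_lt vc; rewrite /label => lt.
by apply: lab_fuel_stable; [lia | exact: max_card].
Qed.

Lemma label_cases v : [|| label v == 1, label v == 2 | label v == 3].
Proof. by rewrite label_stepE /label_step; repeat case: ifP. Qed.

Lemma label_root_neq1 : label r != 1.
Proof. by rewrite label_stepE /label_step eqxx; case: ifP. Qed.

Lemma label1_child v c : v != r -> label v = 1 -> child v c -> label c = 3.
Proof.
move=> vr; rewrite label_stepE /label_step (negbTE vr).
case: ifP => [/allP all3 _ vc|_]; first by apply/eqP; apply: all3; rewrite mem_children.
by case: ifP.
Qed.

Lemma label2_child v : v != r -> label v = 2 -> exists2 c, child v c & label c = 1.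
Proof.
move=> vr; rewrite label_stepE /label_step (negbTE vr).
case: ifP => // _; case: ifP => // /hasP[c vc /eqP c1] _.
by exists c; rewrite -?mem_children.
Qed.

Lemma label3_child2 v : v != r -> label v = 3 -> exists2 c, child v c & label c = 2.
Proof.
move=> vr; rewrite label_stepE /label_step (negbTE vr).
case: ifP => // /allPn[c vc c3]; case: ifP => // /hasPn cN1 _.
exists c; first by rewrite -mem_children.
by move: (label_cases c) (cN1 c vc) c3; case: (label c) => [|[|[|[|?]]]].
Qed.

Lemma label3_childN1 v c : v != r -> label v = 3 -> child v c -> label c != 1.
Proof.
move=> vr; rewrite label_stepE /label_step (negbTE vr).
case: ifP => // _; case: ifP => // /hasPn cN1 _ vc.
by apply: cN1; rewrite mem_children.
Qed.

Lemma label2_parent v c : v != r -> child v c -> label c = 1 -> label v = 2.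
Proof.
move=> vr vc c1; rewrite label_stepE /label_step (negbTE vr).
case: ifP => [/allP all3|_]; first by move: (all3 c); rewrite mem_children c1 => /(_ vc).
by rewrite ifT //; apply/hasP; exists c; rewrite ?mem_children ?c1.
Qed.

Lemma root_label2_child c : label r = 2 -> child r c -> label c != 2.
Proof.
rewrite label_stepE /label_step eqxx; case: ifP => // /hasPn cN2 _ rc.
by apply: cN2; rewrite mem_children.
Qed.

Lemma root_label3_child : label r = 3 -> exists2 c, child r c & label c = 2.
Proof.
rewrite label_stepE /label_step eqxx; case: ifP => // /hasP[c rc /eqP c2] _.
by exists c; rewrite -?mem_children.
Qed.

Hypothesis rdeg1 : degree e r = 1.

Lemma root_neighborP : exists c, forall u, e r u = (u == c).
Proof.
have /cards1P[c rc] : #|[set u | e r u]| == 1 by rewrite -/(degree e r) rdeg1.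
by exists c => u; rewrite -in_set1 -rc inE.
Qed.

Lemma V2_dominating : dominating e (V2 e r).
Proof.
move=> y; rewrite /V2 inE.
case/or3P: (label_cases y) => /eqP ly; last 2 first.
- by left; rewrite ly.
- right; have [yr | yr] := eqVneq y r.
    move: ly; rewrite yr => /root_label3_child[c rc c2].
    by exists c; rewrite ?inE ?c2 // esym child_edge.
  have [c yc c2] := label3_child2 yr ly.
  by exists c; rewrite ?inE ?c2 // esym child_edge.
have yr : y != r by apply: contraTneq label_root_neq1 => yr; rewrite -{2}yr ly.
have [p py] := exists_parent yr; right; exists p; last exact: child_edge py.
rewrite inE; have [pr | pr] := eqVneq p r; last by rewrite (label2_parent pr py ly).
rewrite pr in py *; case/or3P: (label_cases r) => /eqP lr.
- by move: label_root_neq1; rewrite lr.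
- by rewrite lr.
have [c /child_edge rc c2] := root_label3_child lr.
have [c0 rc0] := root_neighborP.
by move: rc (child_edge py) c2; rewrite !rc0 => /eqP -> /eqP <-; rewrite ly.
Qed.

Section Swap.
Variables (D : {set T}) (v : T).
Hypothesis domD : dominating e D.
Hypothesis vD : v \notin D.
Hypothesis minv : forall x, #|subtree x| < #|subtree v| -> label x = 2 -> x \in D.

Local Notation swap u := ((v |: D) :\ u).

Lemma mem_swap_v u : u \in D -> v \in swap u.
Proof. by move=> uD; rewrite !inE eqxx andbT; apply: contraNneq vD => ->. Qed.

Lemma swap_dominates_label3 u y : label u != 2 -> y != r -> label y = 3 ->
  #|subtree y| < #|subtree v| -> dominated e (swap u) y.
Proof.
move=> u2 yr y3 ltyv; have [c yc c2] := label3_child2 yr y3.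
right; exists c; last by rewrite esym child_edge.
have ltcv : #|subtree c| < #|subtree v| := ltn_trans (subtree_child_lt yc) ltyv.
by rewrite !inE minv // orbT andbT; apply: contraNneq u2 => <-; rewrite c2.
Qed.

Lemma swap_dominates_grandchild u z y : label u != 2 -> z != r -> label z = 3 ->
  #|subtree z| < #|subtree v| -> child z y -> y \notin D -> dominated e (swap u) y.
Proof.
move=> u2 zr z3 ltzv zy yD; have ltyv := ltn_trans (subtree_child_lt zy) ltzv.
case/or3P: (label_cases y) => /eqP ly.
- by move: (label3_childN1 zr z3 zy); rewrite ly.
- by move: yD; rewrite minv.
- exact: swap_dominates_label3 u2 (child_neq_root zy) ly ltyv.
Qed.

Lemma swap_label1_child_in w : child v w -> label w = 1 -> w \in D ->
  dominating e (swap w).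
Proof.
move=> vw w1 wD; have wr := child_neq_root vw.
apply: dominating_setU1D1 => // [|y ewy yD].
  by right; exists v; [apply: mem_swap_v | apply: child_edge].
have [-> | yv] := eqVneq y v; first by left; apply: mem_swap_v.
have wy := neighbor_child vw ewy yv; have w2 : label w != 2 by rewrite w1.
apply: swap_dominates_label3 w2 (child_neq_root wy) (label1_child wr w1 wy) _.
exact: ltn_trans (subtree_child_lt wy) (subtree_child_lt vw).
Qed.

Lemma swap_label1_child_out w : child v w -> label w = 1 -> w \notin D ->
  exists2 z, z \in D & label z = 3 /\ dominating e (swap z).
Proof.
move=> vw w1 wD; have wr := child_neq_root vw.
have [wD' | [z zD ezw]] := domD w; first by rewrite wD' in wD.
have zv : z != v by apply: contraNneq vD => <-.
have wz : child w z by apply: neighbor_child vw _ zv; rewrite esym.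
have z3 := label1_child wr w1 wz; have zr := child_neq_root wz.
have ltzv := ltn_trans (subtree_child_lt wz) (subtree_child_lt vw).
have z2 : label z != 2 by rewrite z3.
exists z => //; split => //; apply: dominating_setU1D1 => // [|y ezy yD].
  exact: swap_dominates_label3 z2 zr z3 ltzv.
have [-> | yw] := eqVneq y w; first by right; exists v; [apply: mem_swap_v | apply: child_edge].
exact: swap_dominates_grandchild z2 zr z3 ltzv (neighbor_child wz ezy yw) yD.
Qed.

Lemma swap_root_label3_child w : v = r -> child v w -> label w = 3 ->
  w \in D /\ dominating e (swap w).
Proof.
move=> vr vw w3; have wr := child_neq_root vw.
have wD : w \in D.
  have [rD | [z zD ezr]] := domD r; first by move: vD; rewrite vr rD.
  have [c0 rc0] := root_neighborP.
  have /eqP wc0 : w == c0 by rewrite -rc0 -vr child_edge.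
  have /eqP zc0 : z == c0 by rewrite -rc0 esym.
  by rewrite wc0 -zc0.
have w2 : label w != 2 by rewrite w3.
split => //; apply: dominating_setU1D1 => // [|y ewy yD].
  by right; exists v; [apply: mem_swap_v | apply: child_edge].
have [-> | yv] := eqVneq y v; first by left; apply: mem_swap_v.
exact: swap_dominates_grandchild w2 wr w3 (subtree_child_lt vw) (neighbor_child vw ewy yv) yD.
Qed.

End Swap.

Lemma V2_swap (D : {set T}) : dominating e D -> ~~ (V2 e r \subset D) ->
  exists v u, [/\ v \in V2 e r :\: D, u \in D :\: V2 e r & dominating e ((v |: D) :\ u)].
Proof.
move=> domD /subsetPn[v0 v0V2 v0D].
have v0VD : v0 \in V2 e r :\: D by rewrite inE v0D.
have [v vVD minv] := arg_minnP (fun x => #|subtree x|) v0VD.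
have {}vVD : v \in V2 e r :\: D := vVD.
move: (vVD); rewrite !inE => /andP[vD /eqP v2].
have minV2 x : #|subtree x| < #|subtree v| -> label x = 2 -> x \in D.
  move=> ltxv x2; apply: contraTT ltxv => xD; rewrite -leqNgt; apply: minv.
  by change (x \in V2 e r :\: D); rewrite !inE xD x2.
have notV2 u : label u != 2 -> u \notin V2 e r by rewrite inE.
have [w vw [w1 | [vr w3]]] : exists2 w, child v w & label w = 1 \/ v = r /\ label w = 3.
- have [vr | vr] := eqVneq v r; last first.
    by have [w vw w1] := label2_child vr v2; exists w; last left.
  have [c0 rc0] := root_neighborP.
  have vc0 : child v c0 by rewrite vr root_child // rc0.
  exists c0 => //; move: v2 vc0; rewrite vr => /root_label2_child c0N2 /c0N2.
  by case/or3P: (label_cases c0) => /eqP ->; [left | | right].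
- have [wD | wD] := boolP (w \in D).
    exists v, w; split => //; first by rewrite inE wD notV2 ?w1.
    exact: swap_label1_child_in.
  have [z zD [z3 domz]] := swap_label1_child_out domD vD minV2 vw w1 wD.
  by exists v, z; split; rewrite // inE zD notV2 ?z3.
- have [wD domw] := swap_root_label3_child domD vD minV2 vr vw w3.
  by exists v, w; split; rewrite // inE wD notV2 ?w3.
Qed.

End RootedTree.

Theorem lemma10 (T : finType) (e : rel T) (r : T) (D : {set T}) :
  is_tree e -> 1 < #|T| -> degree e r = 1 ->
  dominating e D -> reconf e #|D|.+1 D (V2 e r).
Proof.
(* [1 < #|T|] is implied by [degree e r = 1]. *)
case=> esym eirr econn eacyc _ rdeg1 domD.
apply: reconf_by_swaps _ _ domD (leqnn _); first exact: V2_dominating.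
by move=> D'; apply: V2_swap.
Qed.
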